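(* There exist a family $\{(s^\xi_n)_{n\in\mathbb N}:\xi<2^\omega\}$ of sequences of reals in $[0,1]$ and a family $\{r_\xi:\xi<2^\omega\}$ of pairwise distinct reals in $[0,1]$ such that: (1) for each $\xi<2^\omega$ the sequence $(s^\xi_n)_{n\in\mathbb N}$ converges to $r_\xi$; (2) for every uncountable $X\subseteq[0,1]$ there is $\xi<2^\omega$ with $\{s^\xi_n:n\in\mathbb N\}\subseteq X$. *)

From Stdlib Require Import Reals.
Open Scope R_scope.

Definition continuum : Type := nat -> bool.

Definition countable_set (X : R -> Prop) : Prop :=
  exists f : nat -> R, forall x, X x -> exists n, f n = x.

Definition uncountable_set (X : R -> Prop) : Prop := ~ countable_set X.

(* Well-order 2^omega so that every proper initial segment has fewer than 2^omega
   elements, and list all sequences of reals as (t_xi). By transfinite recursion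
   choose r_xi in [0,1] distinct from all earlier r_eta and, whenever possible, equal
   to the limit of a [0,1]-valued sequence of terms of t_xi; s^xi is such a sequence
   (or the constant r_xi). An uncountable X included in [0,1] carries a Cantor scheme
   of intervals each meeting X uncountably; picking one point of X in each interval
   gives a sequence t of points of X with 2^omega distinct limits of sequences of its
   terms. At the index xi with t_xi = t one of these limits avoids all earlier r_eta,
   so r_xi is such a limit and s^xi takes its values in X. *)

From Stdlib Require Import Reals Lra Lia Inverse_Image Cantor.
From mathcomp Require Import ssreflect ssrfun ssrbool eqtype ssrnat seq choice.
From mathcomp Require Import boolp wochoice.
Set Implicit Arguments. Unset Strict Implicit.
Set Bullet Behavior "Strict Subproofs".
Open Scope R_scope.

Lemma wf_minimal (T : Type) (lt : T -> T -> Prop) (P : T -> Prop) :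
  well_founded lt -> (exists z, P z) -> exists z, P z /\ forall y, lt y z -> ~ P y.
Proof.
move=> wf_lt [z Pz]; apply: contrapT => no_min.
elim/(well_founded_ind wf_lt): z Pz => z IH Pz; apply: no_min.
by exists z; split=> // y /IH.
Qed.

Lemma exists_well_order (T : Type) :
  exists lt : T -> T -> Prop,
    well_founded lt /\ forall x y, lt x y \/ x = y \/ lt y x.
Proof.
have [R woR] := well_ordering_principle {classic T}.
have chR : wo_chain R predT by move=> A _; exact: woR.
have totR := wo_chainW chR; have antiR := wo_chain_antisymmetric chR.
exists (fun x y => R x y /\ x <> y); split.
- move=> x; apply: contrapT => not_acc.
  pose not_acc_set := [pred w | `[< ~ Acc (fun x y => R x y /\ x <> y) w >]].
  have [|z [[/asboolP z_nacc z_min] _]] := woR not_acc_set; first by exists x; apply/asboolP.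
  apply: z_nacc; constructor=> y [Ryz neq_yz]; apply: contrapT => y_nacc; apply: neq_yz.
  by apply: antiR => //; rewrite Ryz z_min //; apply/asboolP.
- move=> x y; have [->|neq_xy] := pselect (x = y); first by right; left.
  have /orP[Rxy|Ryx] := totR x y isT isT; [left | right; right] => //.
  by split=> // eq_yx; apply: neq_xy.
Qed.

Definition injects_below (T : Type) (lt : T -> T -> Prop) (x : T) :=
  exists g : T -> T, injective g /\ forall w, lt (g w) x.

(* The order type of [lt] is the initial ordinal of the cardinality of [T]. *)
Lemma exists_initial_well_order (T : Type) :
  exists lt : T -> T -> Prop,
    [/\ well_founded lt, forall x y, lt x y \/ x = y \/ lt y x
      & forall x, ~ injects_below lt x].
Proof.
have [lt0 [wf0 tri0]] := exists_well_order T.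
have [short|] := pselect (exists z, injects_below lt0 z); last first.
  by move=> none; exists lt0; split=> // x inj_x; apply: none; exists x.
have [z [[f [inj_f f_below]] z_min]] := wf_minimal wf0 short.
exists (fun x y => lt0 (f x) (f y)); split.
- exact: wf_inverse_image.
- by move=> x y; have [|[/inj_f|]] := tri0 (f x) (f y); auto.
- move=> x [g [inj_g g_below]]; apply: (z_min (f x) (f_below x)).
  by exists (f \o g); split; [exact: inj_comp|].
Qed.

Lemma injection_avoids_segment (T A : Type) (lt : T -> T -> Prop) (x : T)
    (r phi : T -> A) :
  ~ injects_below lt x -> injective phi ->
  exists w, forall y, lt y x -> r y <> phi w.
Proof.
move=> small inj_phi; apply: contrapT => covered; apply: small.
have hit w : exists y, lt y x /\ r y = phi w.
  apply: contrapT => miss; apply: covered; exists w => y lt_yx r_y.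
  by apply: miss; exists y.
have [g g_spec] := choice hit.
exists g; split=> [v w eq_g|w]; last by case: (g_spec w).
by apply: inj_phi; rewrite -(proj2 (g_spec v)) -(proj2 (g_spec w)) eq_g.
Qed.

Lemma wf_recursive_choice (T A : Type) (lt : T -> T -> Prop)
    (Q : T -> (A -> Prop) -> A -> Prop) :
  well_founded lt -> inhabited A ->
  (forall x (f : T -> A), exists a, Q x (fun b => exists2 y, lt y x & f y = b) a) ->
  exists r : T -> A, forall x, Q x (fun b => exists2 y, lt y x & r y = b) (r x).
Proof.
move=> wf_lt [a0] step.
pose total x (f : forall y, lt y x -> A) y :=
  if pselect (lt y x) is left lt_yx then f y lt_yx else a0.
pose F x f := sval (cid (step x (total x f))).
pose r := Fix wf_lt (fun _ => A) F.
have r_fix x : r x = F x (fun y _ => r y).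
  apply: Fix_eq => {}x f g eq_fg; rewrite /F; congr (sval (cid (step x _))).
  by apply: funext => y; rewrite /total; case: pselect.
exists r => x; rewrite r_fix /F; case: cid => a /=.
congr (Q x _ a); apply: funext => b; apply: propext.
by split=> -[y lt_yx <-]; exists y; rewrite // /total; case: pselect.
Qed.

Definition rat_enum (k : nat) : R :=
  let (a, q) := Cantor.of_nat k in let (p, p') := Cantor.of_nat a in
  (INR p - INR p') / INR q.+1.

Lemma rat_enum_dense x y : x < y -> exists k, x < rat_enum k < y.
Proof.
move=> lt_xy; have [N [N_small N_gt0]] := archimed_cor1 (y - x) ltac:(lra).
have N_pos : 0 < INR N by apply: lt_0_INR.
have [] := archimed (x * INR N); set z := up _ => z_gt z_le.
set p := Z.to_nat z; set p' := Z.to_nat (- z).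
have z_E : IZR z = INR p - INR p'.
  by rewrite !INR_IZR_INZ -minus_IZR; congr IZR; rewrite /p /p'; lia.
exists (Cantor.to_nat (Cantor.to_nat (p, p'), N.-1)).
rewrite /rat_enum !Cantor.cancel_of_to -z_E prednK; last by apply/ltP.
have zK : IZR z / INR N * INR N = IZR z by field; lra.
have gap : 1 < (y - x) * INR N.
  by rewrite -(Rinv_l (INR N)); [apply: Rmult_lt_compat_r | lra].
by split; apply: (Rmult_lt_reg_r (INR N)); rewrite ?zK; lra.
Qed.

Definition seq_code (t : nat -> R) : continuum :=
  fun n => let (m, k) := Cantor.of_nat n in
           if Rlt_dec (rat_enum k) (t m) then true else false.

Lemma seq_code_inj : injective seq_code.
Proof.
move=> t1 t2 eq_code; apply: funext => m.
have cut_eq k : (rat_enum k < t1 m) <-> (rat_enum k < t2 m).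
  have := f_equal (fun c => c (Cantor.to_nat (m, k))) eq_code.
  rewrite /seq_code Cantor.cancel_of_to.
  by do 2 case: Rlt_dec => ? //; split.
have [lt12|[//|lt21]] := Rtotal_order (t1 m) (t2 m).
- have [k [? ?]] := rat_enum_dense lt12; have := cut_eq k; lra.
- have [k [? ?]] := rat_enum_dense lt21; have := cut_eq k; lra.
Qed.

Lemma inj_has_left_inverse (A B : Type) (f : A -> B) :
  injective f -> inhabited A -> exists g : B -> A, cancel f g.
Proof.
move=> inj_f [a0].
exists (fun b => if pselect (exists a, f a = b) is left ex then sval (cid ex) else a0).
move=> a; case: pselect => [ex|]; last by case; exists a.
by apply: inj_f; case: cid.
Qed.

Lemma continuum_onto_sequences :
  exists code : continuum -> nat -> R, forall t, exists xi, code xi = t.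
Proof.
have [code codeK] := inj_has_left_inverse seq_code_inj (inhabits (fun=> 0)).
by exists code => t; exists (seq_code t).
Qed.

Lemma countable_sub (A B : R -> Prop) :
  (forall x, A x -> B x) -> countable_set B -> countable_set A.
Proof. by move=> sAB [f f_onto]; exists f => x /sAB /f_onto. Qed.

Lemma countable_empty (A : R -> Prop) : (forall x, ~ A x) -> countable_set A.
Proof. by move=> A0; exists (fun=> 0) => x /A0. Qed.

Lemma uncountable_nonempty (A : R -> Prop) : uncountable_set A -> exists x, A x.
Proof.
move=> unc_A; apply: contrapT => A0; apply: unc_A; apply: countable_empty.
by move=> x Ax; apply: A0; exists x.
Qed.

Lemma countable_set1 a : countable_set (fun x => x = a).
Proof. by exists (fun=> a) => x ->; exists 0%N. Qed.

Lemma countable_bigU (A : nat -> R -> Prop) :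
  (forall n, countable_set (A n)) -> countable_set (fun x => exists n, A n x).
Proof.
move=> /choice[f f_onto].
exists (fun m => let (n, k) := Cantor.of_nat m in f n k) => x [n /f_onto [k <-]].
by exists (Cantor.to_nat (n, k)); rewrite Cantor.cancel_of_to.
Qed.

Lemma countableU (A B : R -> Prop) :
  countable_set A -> countable_set B -> countable_set (fun x => A x \/ B x).
Proof.
move=> cA cB; pose AB n := if n is 0%N then A else B.
apply: (@countable_sub _ (fun x => exists n, AB n x)); last by apply: countable_bigU => -[].
by move=> x [Ax|Bx]; [exists 0%N | exists 1%N].
Qed.

Lemma countable_opp (A : R -> Prop) :
  countable_set A -> countable_set (fun x => A (- x)).
Proof.
move=> [f f_onto]; exists (fun n => - f n) => x /f_onto [n fn].
by exists n; rewrite fn Ropp_involutive.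
Qed.

(* [m] is the least condensation point of [Y]. *)
Lemma countable_left_tail (Y : R -> Prop) l u :
  (forall y, Y y -> l <= y <= u) -> uncountable_set Y ->
  exists m, countable_set (fun y => Y y /\ y < m) /\
            forall a, m < a -> uncountable_set (fun y => Y y /\ y < a).
Proof.
move=> Y_lu unc_Y; pose S a := countable_set (fun y => Y y /\ y < a).
have S_ub a : S a -> a <= u.
  move=> cnt_a; apply: Rnot_lt_le => lt_ua; apply: unc_Y; apply: countable_sub cnt_a.
  by move=> y Yy; have := Y_lu y Yy; split=> //; lra.
have S_l : S l by apply: countable_empty => y [/Y_lu]; lra.
have [m [m_ub m_lub]] := completeness S (ex_intro _ u S_ub) (ex_intro _ l S_l).
exists m; split=> [|a lt_ma cnt_a]; last by have := m_ub a cnt_a; lra.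
apply: (@countable_sub _ (fun y => exists n, Y y /\ y < m - / INR n.+1)).
  move=> y [Yy lt_ym]; have [N [N_small N_gt0]] := archimed_cor1 (m - y) ltac:(lra).
  by exists N.-1; rewrite prednK; [split=> //; lra | apply/ltP].
apply: countable_bigU => n.
have [a [S_a lt_a]] : exists a, S a /\ m - / INR n.+1 < a.
  apply: contrapT => none.
  have := Rinv_0_lt_compat _ (lt_0_INR n.+1 (Nat.lt_0_succ n)).
  suff : m <= m - / INR n.+1 by lra.
  by apply: m_lub => a S_a; apply: Rnot_lt_le => lt_a; apply: none; exists a.
by apply: countable_sub S_a => y [Yy lt_y]; split=> //; lra.
Qed.

Definition uncountable_in (X : R -> Prop) (l u : R) :=
  uncountable_set (fun x => X x /\ l <= x <= u).

Lemma uncountable_in_le X l u : uncountable_in X l u -> l <= u.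
Proof. by move=> /uncountable_nonempty [x [_ ?]]; lra. Qed.

Lemma uncountable_in_separate X l u :
  uncountable_in X l u -> exists a b, [/\ a < b, uncountable_in X l a & uncountable_in X b u].
Proof.
move=> unc; set Y := fun x => X x /\ l <= x <= u.
have [m [cnt_left unc_right]] :=
  @countable_left_tail Y l u (fun y (Yy : Y y) => proj2 Yy) unc.
have [m' [cnt_left' unc_right']] : exists m', countable_set (fun y => Y (- y) /\ y < m') /\
    forall a, m' < a -> uncountable_set (fun y => Y (- y) /\ y < a).
  apply: (@countable_left_tail _ (- u) (- l)) => [y [_ ?]|/countable_opp cnt]; first lra.
  by apply: unc; apply: countable_sub cnt => y Yy; rewrite Ropp_involutive.
pose M := - m'. (* the largest condensation point of [Y] *)
have cnt_above : countable_set (fun y => Y y /\ M < y).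
  apply: countable_sub (countable_opp cnt_left') => y [Yy lt_y].
  by rewrite Ropp_involutive; split=> //; rewrite /M in lt_y; lra.
have unc_above b : b < M -> uncountable_set (fun y => Y y /\ b < y).
  move=> lt_b /countable_opp cnt; apply: (unc_right' (- b)); first by rewrite /M in lt_b; lra.
  by apply: countable_sub cnt => y [Yy lt_y]; split=> //; lra.
have lt_mM : m < M.
  apply: Rnot_le_lt => le_Mm; apply: unc.
  apply: countable_sub (countableU cnt_left (countableU (countable_set1 m) cnt_above)).
  move=> x Yx; have [lt|[eq|gt]] := Rtotal_order x m; [left|right; left|right; right] => //.
  by split=> //; lra.
exists ((2 * m + M) / 3), ((m + 2 * M) / 3); split; first lra.
- move=> cnt; apply: (unc_right ((2 * m + M) / 3)); first lra.
  by apply: countable_sub cnt => y [[Xy ?] ?]; split=> //; lra.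
- move=> cnt; apply: (unc_above ((m + 2 * M) / 3)); first lra.
  by apply: countable_sub cnt => y [[Xy ?] ?]; split=> //; lra.
Qed.

Lemma uncountable_in_halve X l u :
  uncountable_in X l u ->
  exists l' u', [/\ l <= l', u' <= u, u' - l' = (u - l) / 2 & uncountable_in X l' u'].
Proof.
move=> unc; have le_lu := uncountable_in_le unc.
have [unc_l|unc_r] : uncountable_in X l ((l + u) / 2) \/ uncountable_in X ((l + u) / 2) u.
- apply: contrapT => /not_orP[/contrapT cnt_l /contrapT cnt_r]; apply: unc.
  apply: countable_sub (countableU cnt_l cnt_r) => x [Xx ?].
  by have [?|?] := Rle_lt_dec x ((l + u) / 2); [left|right]; split=> //; lra.
- by exists l, ((l + u) / 2); split=> //; lra.
- by exists ((l + u) / 2), u; split=> //; lra.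
Qed.

Definition half_sub (p q : R * R) :=
  [/\ p.1 <= q.1, q.2 <= p.2 & q.2 - q.1 <= (p.2 - p.1) / 2].

Definition splits (G : R * R -> Prop) (p : R * R) (q : (R * R) * (R * R)) :=
  [/\ q.1.2 < q.2.1, half_sub p q.1, half_sub p q.2, G q.1 & G q.2].

Section CantorScheme.

Variable G : R * R -> Prop.
Hypothesis G_le : forall p, G p -> p.1 <= p.2.
Hypothesis G_split : forall p, G p -> exists q, splits G p q.
Variable p0 : R * R.
Hypothesis G_p0 : G p0.

Let split_of (p : R * R) : (R * R) * (R * R) :=
  if pselect (exists q, splits G p q) is left ex then sval (cid ex) else (p, p).

Let split_ofP p : G p -> splits G p (split_of p).
Proof. by move=> /G_split ex; rewrite /split_of; case: pselect => // ex'; case: cid. Qed.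

Let child (p : R * R) (c : bool) := if c then (split_of p).2 else (split_of p).1.

Fixpoint node (n : nat) (b : continuum) : R * R :=
  if n is n'.+1 then child (node n' b) (b n') else p0.

Let node_G n b : G (node n b).
Proof.
elim: n => //= n IHn; have [_ _ _ ? ?] := split_ofP IHn.
by rewrite /child; case: (b n).
Qed.

Let node_half n b : half_sub (node n b) (node n.+1 b).
Proof. by have [_ ? ? _ _] := split_ofP (node_G n b); rewrite /= /child; case: (b n). Qed.

Let node_length n b : (node n b).2 - (node n b).1 <= (p0.2 - p0.1) * (/ 2) ^ n.
Proof.
elim: n => [|n IHn]; first by rewrite /=; lra.
have -> : (p0.2 - p0.1) * (/ 2) ^ n.+1 = (p0.2 - p0.1) * (/ 2) ^ n / 2 by rewrite /=; field.
by have [_ _ len] := node_half n b; lra.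
Qed.

Let node_nested n m b : (n <= m)%N ->
  (node n b).1 <= (node m b).1 /\ (node m b).2 <= (node n b).2.
Proof.
elim: m => [|m IHm]; first by rewrite leqn0 => /eqP->; lra.
rewrite leq_eqVlt => /orP[/eqP->|/IHm]; first lra.
by have [? ? _] := node_half m b; lra.
Qed.

Let node_left_le_right n m b : (node m b).1 <= (node n b).2.
Proof.
have [le_nm|/ltnW le_mn] := leqP n m.
- by have [? ?] := node_nested b le_nm; have := G_le (node_G m b); lra.
- by have [? ?] := node_nested b le_mn; have := G_le (node_G n b); lra.
Qed.

Let nested_point b : exists x, forall n, (node n b).1 <= x <= (node n b).2.
Proof.
pose E x := exists n, x = (node n b).1.
have bound_E : bound E by exists (node 0 b).2 => x [n ->]; exact: node_left_le_right.
have [m [m_ub m_lub]] := completeness E bound_E (ex_intro _ _ (ex_intro _ 0%N erefl)).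
exists m => n; split; first by apply: m_ub; exists n.
by apply: m_lub => x [k ->]; exact: node_left_le_right.
Qed.

Definition point (b : continuum) : R := sval (cid (nested_point b)).

Let point_in b n : (node n b).1 <= point b <= (node n b).2.
Proof. by rewrite /point; case: cid. Qed.

Let point_cvg b (v : nat -> R) :
  (forall n, (node n b).1 <= v n <= (node n b).2) -> Un_cv v (point b).
Proof.
move=> v_in eps eps_gt0; set L := p0.2 - p0.1.
have L_ge0 : 0 <= L by have := G_le G_p0; rewrite /L; lra.
have [N N_small] := pow_lt_1_zero (/ 2) ltac:(rewrite Rabs_right; lra)
  (eps / (L + 1)) ltac:(apply: Rdiv_lt_0_compat; lra).
exists N => n le_Nn; have := N_small n le_Nn.
rewrite Rabs_right; last by apply: Rle_ge; apply: pow_le; lra.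
move=> small_n; have pow_ge0 : 0 <= (/ 2) ^ n by apply: pow_le; lra.
have small_L : (/ 2) ^ n * (L + 1) < eps.
  apply: (Rlt_le_trans _ (eps / (L + 1) * (L + 1))); first by apply: Rmult_lt_compat_r; lra.
  by right; field; lra.
have := node_length n b; have := point_in b n; have := v_in n; rewrite -/L /Rdist.
by move=> ? ? ?; apply: Rabs_def1; nra.
Qed.

Let node_prefix n b b' : (forall i, (i < n)%N -> b i = b' i) -> node n b = node n b'.
Proof.
elim: n => //= n IHn eq_bb'.
by rewrite IHn => [|i lt_in]; [rewrite eq_bb' | apply: eq_bb'; apply: ltnW].
Qed.

Let point_inj : injective point.
Proof.
move=> b b' eq_pt; apply: funext => i0; apply/eqP; apply: contraT => neq0.
case: (ex_minnP (ex_intro (fun i => b i != b' i) i0 neq0)) => i neq min_i.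
have eq_node : node i b = node i b'.
  apply: node_prefix => j lt_ji; apply/eqP; apply: contraT => /min_i.
  by rewrite leqNgt lt_ji.
have [sep _ _ _ _] := split_ofP (node_G i b).
have := point_in b i.+1; have := point_in b' i.+1; rewrite /= /child -eq_node -eq_pt.
by move: neq; case: (b i); case: (b' i) => //= _; lra.
Qed.

Lemma cantor_scheme :
  exists (node : nat -> continuum -> R * R) (point : continuum -> R),
  [/\ injective point, forall n b, G (node n b),
      forall b, p0.1 <= point b <= p0.2,
      forall n b b', (forall i, (i < n)%N -> b i = b' i) -> node n b = node n b'
    & forall b v, (forall n, (node n b).1 <= v n <= (node n b).2) -> Un_cv v (point b)].
Proof.
exists node, point; split; [exact: point_inj | exact: node_G
  | by move=> b; exact: (point_in b 0) | exact: node_prefix | exact: point_cvg].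
Qed.

End CantorScheme.

Lemma uncountable_in_split X l u :
  uncountable_in X l u -> exists q, splits (fun p => uncountable_in X p.1 p.2) (l, u) q.
Proof.
move=> /uncountable_in_separate [a [b [lt_ab unc_la unc_bu]]].
have [le_la le_bu] := (uncountable_in_le unc_la, uncountable_in_le unc_bu).
have [l1 [u1 [? ? ? unc1]]] := uncountable_in_halve unc_la.
have [l2 [u2 [? ? ? unc2]]] := uncountable_in_halve unc_bu.
by exists ((l1, u1), (l2, u2)); split=> //=; [lra | split=> /= | split=> /=]; lra.
Qed.

Lemma continuum_into_unit :
  exists psi : continuum -> R, injective psi /\ forall b, 0 <= psi b <= 1.
Proof.
have [||| _ [psi [inj_psi _ psi01 _ _]]] := @cantor_scheme (fun p => p.1 < p.2) _ _ (0, 1).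
- by move=> p; lra.
- move=> [l u] /= lt_lu; exists ((l, l + (u - l) / 3), (u - (u - l) / 3, u)).
  by split=> /=; [lra | split=> /= | split=> /= | lra | lra]; lra.
- by rewrite /=; lra.
- by exists psi.
Qed.

Definition approachable (t : nat -> R) (a : R) :=
  (0 <= a <= 1) /\
  exists u : nat -> R, (forall n, 0 <= u n <= 1 /\ exists m, u n = t m) /\ Un_cv u a.

Lemma uncountable_limit_points (X : R -> Prop) :
  (forall x, X x -> 0 <= x <= 1) -> uncountable_set X ->
  exists (t : nat -> R) (phi : continuum -> R),
    [/\ forall m, X (t m), injective phi & forall b, approachable t (phi b)].
Proof.
move=> X01 unc_X; pose G p := uncountable_in X p.1 p.2.
have G_p0 : G (0, 1).
  by move=> cnt; apply: unc_X; apply: countable_sub cnt => x Xx; split=> //; apply: X01.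
have G_le p : G p -> p.1 <= p.2 by apply: uncountable_in_le.
have G_split p : G p -> exists q, splits G p q by case: p => l u; apply: uncountable_in_split.
have [node [point [inj_point node_G point01 node_prefix point_cvg]]] :=
  cantor_scheme G_le G_split G_p0.
have /choice[pick pickP] : forall p : R * R, exists x, G p -> X x /\ p.1 <= x <= p.2.
  move=> p; have [/uncountable_nonempty [x ?]|nG] := pselect (G p); first by exists x.
  by exists 0.
pose t m := let s := odflt [::] (unpickle m) in pick (node (size s) (nth false s)).
exists t, point; split=> // [m|b].
  by rewrite /t; set s := odflt _ _; case: (pickP _ (node_G (size s) (nth false s))).
split; first exact: point01.
exists (fun n => pick (node n b)); split=> [n|]; last first.
  by apply: point_cvg => n; case: (pickP _ (node_G n b)).
have [Xn _] := pickP _ (node_G n b); split; first exact: X01.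
exists (pickle (mkseq b n)); rewrite /t pickleK /= size_mkseq.
by congr pick; apply: node_prefix => i lt_in; rewrite nth_mkseq.
Qed.

Lemma approaching_sequence t a : 0 <= a <= 1 ->
  exists u : nat -> R, [/\ forall n, 0 <= u n <= 1, Un_cv u a
    & approachable t a -> forall n, exists m, u n = t m].
Proof.
move=> a01; have [[_ [u [u_in u_cvg]]]|not_good] := pselect (approachable t a).
  by exists u; split=> // [n|_ n]; have [] := u_in n.
exists (fun=> a); split=> [n|eps eps_gt0|/not_good//]; first exact: a01.
by exists 0%N => n _; rewrite /R_dist Rminus_diag Rabs_R0.
Qed.

Theorem lemma3p1 :
  exists (s : continuum -> nat -> R) (r : continuum -> R),
    (forall xi n, 0 <= s xi n <= 1) /\
    (forall xi, 0 <= r xi <= 1) /\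
    (forall xi eta, xi <> eta -> r xi <> r eta) /\
    (forall xi, Un_cv (s xi) (r xi)) /\
    (forall X : R -> Prop,
        (forall x, X x -> 0 <= x <= 1) ->
        uncountable_set X ->
        exists xi, forall n, X (s xi n)).
Proof.
have [lt [wf_lt tri_lt small]] := exists_initial_well_order continuum.
have [psi [inj_psi psi01]] := continuum_into_unit.
have [code code_onto] := continuum_onto_sequences.
pose fresh xi (U : R -> Prop) a := [/\ 0 <= a <= 1, ~ U a
  & (exists2 a', approachable (code xi) a' & ~ U a') -> approachable (code xi) a].
have [r r_fresh] : exists r : continuum -> R,
    forall xi, fresh xi (fun b => exists2 eta, lt eta xi & r eta = b) (r xi).
  apply: wf_recursive_choice => // [|xi f]; first exact: inhabits 0.
  have [[a good_a new_a]|none] :=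
    pselect (exists2 a, approachable (code xi) a & ~ exists2 eta, lt eta xi & f eta = a).
    by exists a; split=> //; case: good_a.
  have [w new_w] := injection_avoids_segment f (small xi) inj_psi.
  by exists (psi w); split=> [|[eta /new_w]|/none]; first exact: psi01.
have r01 xi : 0 <= r xi <= 1 by case: (r_fresh xi).
have /choice[s s_spec] := fun xi => approaching_sequence (code xi) (r01 xi).
exists s, r; split; [|split; [|split; [|split]]].
- by move=> xi n; have [] := s_spec xi.
- exact: r01.
- move=> xi eta neq_xe eq_r; have [lt_xe|[//|lt_ex]] := tri_lt xi eta.
  + by have [_ + _] := r_fresh eta; apply; exists xi.
  + by have [_ + _] := r_fresh xi; apply; exists eta.
- by move=> xi; have [] := s_spec xi.
- move=> X X01 unc_X.
  have [t [phi [X_t inj_phi phi_good]]] := uncountable_limit_points X01 unc_X.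
  have [xi code_xi] := code_onto t; subst t.
  have [w new_w] := injection_avoids_segment r (small xi) inj_phi.
  have good_r : approachable (code xi) (r xi).
    by have [_ _] := r_fresh xi; apply; exists (phi w) => // -[eta /new_w].
  by exists xi => n; have [_ _ /(_ good_r n) [m ->]] := s_spec xi.
Qed.
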